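(* Let $C$ be a binary linear self-dual code of length $n$ with exact weight enumerator $W$ and derivatives $W_{<t>}$. Then for every integer $t$ with $0\le t\le n-1$ and every $v\in F^{n-t-1}$, $$W_{<t>}[(1)\overline{v}]=(-1)^{wt(v)}\rho^{t}\,\Phi\big(W_{<t>}[(0)v]\big),$$ where $\overline{v}$ is the complement of $v$ (all coordinates flipped), $(0)v$ and $(1)\overline v$ denote prepending $0$, respectively $1$, and $\Phi$ is the nontrivial automorphism of $\mathbb{Q}(\sqrt2)$.
   Context: $F=\{0,1\}$ is the binary field. A binary linear self-dual code $C$ of length $n$ is a linear subspace of $F^n$ of dimension $n/2$ equal to its orthogonal complement under the standard dot product. The exact weight enumerator of $C$ is the vector $W\in\mathbb{Q}^{2^n}$ whose entries are labeled by the vectors of $F^n$ (in lexicographic order), with $W[v]=1$ if $v\in C$ and $W[v]=0$ otherwise. Let $\rho=\sqrt2-1$ and $\mu=-\sqrt2-1$; $\mathbb{Q}(\rho)=\mathbb{Q}(\sqrt2)$ and $\Phi:\mathbb{Q}(\rho)\to\mathbb{Q}(\rho)$ is the field automorphism with $\Phi(\rho)=\mu$ (equivalently $\Phi(\sqrt2)=-\sqrt2$). For $0\le t\le n$, the $t$-th derivative of $W$ is the vector $W_{<t>}$ of length $2^{n-t}$ with entries labeled by $v\in F^{n-t}$ given by $W_{<t>}[v]=\sum_{u\in F^t}\rho^{wt(u)}W[uv]$, where $wt(u)$ is the Hamming weight of $u$ and $uv$ is the concatenation of $u$ and $v$. *)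

From mathcomp Require Import all_boot all_order all_algebra.
Set Implicit Arguments. Unset Strict Implicit. Unset Printing Implicit Defensive.
Import Order.TTheory GRing.Theory Num.Theory.
Local Open Scope ring_scope.

(* Vectors of F^n = {0,1}^n are n.-tuples of booleans (true = 1). *)

Definition wt (s : seq bool) : nat := count id s.

Definition dotF2 (u v : seq bool) : bool := odd (count id [seq x.1 && x.2 | x <- zip u v]).

Definition addF2 n (u v : n.-tuple bool) : n.-tuple bool :=
  [tuple of [seq x.1 (+) x.2 | x <- zip u v]].

(* C is a linear subspace of F^n (over F_2 this is: contains 0, closed under +). *)
Definition is_linear_code n (C : {set n.-tuple bool}) : Prop :=
  [tuple of nseq n false] \in C /\
  forall u v, u \in C -> v \in C -> addF2 u v \in C.

Definition orth n (C : {set n.-tuple bool}) : {set n.-tuple bool} :=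
  [set v : n.-tuple bool | [forall c in C, ~~ dotF2 v c]].

(* Binary linear self-dual code: linear, of dimension n/2 (i.e. 2 * dim = n,
   i.e. #|C|^2 = 2^n), and equal to its orthogonal complement. *)
Definition self_dual n (C : {set n.-tuple bool}) : Prop :=
  [/\ is_linear_code C, (#|C| ^ 2 = 2 ^ n)%N & C = orth C].

(* The field Q(sqrt 2), modelled as pairs (a, b) of rationals representing
   a + b sqrt 2.  Addition is the componentwise (zmodType) addition on pairs. *)
Definition Q2 := (rat * rat)%type.
Definition q2 (a b : rat) : Q2 := (a, b).
Definition q2mul (x y : Q2) : Q2 := (x.1 * y.1 + 2 * (x.2 * y.2), x.1 * y.2 + x.2 * y.1).
Definition q2one : Q2 := (1, 0).
Definition q2exp (x : Q2) (k : nat) : Q2 := iter k (q2mul x) q2one.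

(* rho = sqrt 2 - 1, mu = - sqrt 2 - 1. *)
Definition rho : Q2 := (-1, 1).
Definition mu : Q2 := (-1, -1).

Definition Phi (x : Q2) : Q2 := (x.1, - x.2).

Definition W n (C : {set n.-tuple bool}) (s : seq bool) : Q2 :=
  if [exists c in C, val c == s] then q2one else 0.

Definition Wder n (C : {set n.-tuple bool}) (t : nat) (v : seq bool) : Q2 :=
  \sum_(u : t.-tuple bool) q2mul (q2exp rho (wt u)) (W C (val u ++ v)).

From mathcomp Require Import all_boot all_order all_algebra.
From mathcomp Require Import ring.
Set Implicit Arguments. Unset Strict Implicit. Unset Printing Implicit Defensive.
Import GRing.Theory.
Local Open Scope ring_scope.

(* Complementation is a bijection of F^t, and since C = C^perp forces every
   word of C to have even weight, the all-ones word lies in C^perp = C; hence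
   C is closed under complementation.  Reindexing the sum defining
   W_<t>[(1) v̄] by u |-> ū turns it, term by term, into
   rho^(t - wt u) W[u (0) v].  A nonzero term has wt u + wt v even, and since
   rho * Phi(rho) = -1 we get rho^(t-k) = (-1)^(wt v) rho^t Phi(rho^k) for
   k = wt u, which is the claimed identity summand by summand. *)

Lemma q2E (x y : Q2) : x.1 = y.1 -> x.2 = y.2 -> x = y.
Proof. by case: x; case: y => ? ? ? ? /= -> ->. Qed.

Lemma q2mulC x y : q2mul x y = q2mul y x.
Proof. by apply: q2E; rewrite /q2mul /=; ring. Qed.

Lemma q2mulA x y z : q2mul x (q2mul y z) = q2mul (q2mul x y) z.
Proof. by apply: q2E; rewrite /q2mul /=; ring. Qed.

Lemma q2mul1l x : q2mul q2one x = x.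
Proof. by apply: q2E; rewrite /q2mul /=; ring. Qed.

Lemma q2mul0r x : q2mul x 0 = 0.
Proof. by apply: q2E; rewrite /q2mul /=; ring. Qed.

Lemma q2mulDr x y z : q2mul x (y + z) = q2mul x y + q2mul x z.
Proof. by apply: q2E; rewrite /q2mul /=; ring. Qed.

Lemma q2mul_rat a b : q2mul (q2 a 0) (q2 b 0) = q2 (a * b) 0.
Proof. by apply: q2E; rewrite /q2mul /=; ring. Qed.

Lemma q2expD x a b : q2exp x (a + b) = q2mul (q2exp x a) (q2exp x b).
Proof.
elim: a => [|a IH]; first by rewrite q2mul1l.
by rewrite addSn /q2exp /= -/(q2exp x (a + b)) -/(q2exp x a) IH q2mulA.
Qed.

Lemma q2expMn x y a : q2exp (q2mul x y) a = q2mul (q2exp x a) (q2exp y a).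
Proof.
elim: a => [|a IH]; first by rewrite q2mul1l.
rewrite /q2exp /= -!/(q2exp _ a) IH !q2mulA; congr q2mul.
by rewrite -!q2mulA [q2mul y _]q2mulC.
Qed.

Lemma q2exp_rat a k : q2exp (q2 a 0) k = q2 (a ^+ k) 0.
Proof. by elim: k => [|k IH] //; rewrite /q2exp /= -/(q2exp _ k) IH q2mul_rat exprS. Qed.

Lemma PhiD x y : Phi (x + y) = Phi x + Phi y.
Proof. by apply: q2E; rewrite /Phi /=; ring. Qed.

Lemma Phi0 : Phi 0 = 0.
Proof. by apply: q2E; rewrite /Phi /=; ring. Qed.

Lemma PhiM x y : Phi (q2mul x y) = q2mul (Phi x) (Phi y).
Proof. by apply: q2E; rewrite /Phi /q2mul /=; ring. Qed.

Lemma Phi_exp x k : Phi (q2exp x k) = q2exp (Phi x) k.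
Proof.
elim: k => [|k IH]; first by apply: q2E; rewrite /Phi /=; ring.
by rewrite /q2exp /= -!/(q2exp _ k) PhiM IH.
Qed.

Lemma rho_norm : q2mul rho (Phi rho) = q2 (-1) 0.
Proof. by apply: q2E; rewrite /q2mul /=; ring. Qed.

Lemma rho_exp_subn t k m : (k <= t)%N -> ~~ odd (k + m) ->
  q2exp rho (t - k) =
  q2mul (q2 ((-1) ^+ m) 0) (q2mul (q2exp rho t) (Phi (q2exp rho k))).
Proof.
move=> le_kt even_km.
have sign_km : (-1) ^+ m * (-1) ^+ k = 1 :> rat.
  by rewrite -exprD -signr_odd addnC (negPf even_km).
rewrite -{2}(subnK le_kt) q2expD Phi_exp -q2mulA -q2expMn rho_norm q2exp_rat.
by rewrite q2mulC -q2mulA q2mul_rat mulrC sign_km q2mulC q2mul1l.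
Qed.

Lemma wt_cat (a b : seq bool) : wt (a ++ b) = (wt a + wt b)%N.
Proof. exact: count_cat. Qed.

Lemma wt_map_negb (s : seq bool) : wt (map negb s) = (size s - wt s)%N.
Proof. by rewrite /wt count_map -(count_predC id s) addKn; apply: eq_count. Qed.

Lemma dotF2_self (s : seq bool) : dotF2 s s = odd (wt s).
Proof. by rewrite /dotF2; congr (odd (count id _)); elim: s => //= b s ->; rewrite andbb. Qed.

Lemma dotF2_negbl (a b : seq bool) : size a = size b ->
  dotF2 (map negb a) b = dotF2 a b (+) odd (wt b).
Proof.
rewrite /dotF2 /wt; elim: a b => [|x a IH] [|y b] //= [] /IH.
by rewrite !oddD => ->; case: x; case: y => //=; do 2!case: odd.
Qed.

Lemma map_tuple_negbK t : involutive (@map_tuple t _ _ negb).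
Proof. by move=> u; apply: val_inj; rewrite /= mapK //; apply: negbK. Qed.

Lemma Phi_W n (C : {set n.-tuple bool}) s : Phi (W C s) = W C s.
Proof. by rewrite /W; case: ifP => _; apply: q2E; rewrite /Phi /= ?oppr0. Qed.

Section SelfOrthogonal.

Variables (n : nat) (C : {set n.-tuple bool}).
Hypothesis C_orth : C = orth C.

Lemma orth_code c c' : c \in C -> c' \in C -> ~~ dotF2 c c'.
Proof. by rewrite {1}C_orth inE => /forall_inP; apply. Qed.

Lemma code_even_wt c : c \in C -> ~~ odd (wt c).
Proof. by move=> cC; rewrite -dotF2_self orth_code. Qed.

Lemma code_map_negb c : c \in C -> map_tuple negb c \in C.
Proof.
move=> cC; rewrite C_orth inE; apply/forall_inP => c' c'C.
rewrite dotF2_negbl ?size_tuple //.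
by rewrite (negPf (orth_code cC c'C)) (negPf (code_even_wt c'C)).
Qed.

Lemma W_map_negb s : W C (map negb s) = W C s.
Proof.
rewrite /W; congr (if _ then _ else _).
apply/existsP/existsP => -[c /andP[cC /eqP e]];
  exists (map_tuple negb c); rewrite code_map_negb //=.
  by rewrite e mapK //; apply: negbK.
by rewrite e.
Qed.

Lemma W_neq0_even s : W C s != 0 -> ~~ odd (wt s).
Proof.
rewrite /W; case: existsP => [[c /andP[cC /eqP <-]] _|]; last by rewrite eqxx.
exact: code_even_wt.
Qed.

End SelfOrthogonal.

Theorem mainTheorem3 (n : nat) (C : {set n.-tuple bool}) :
  self_dual C ->
  forall (t : nat), (t <= n - 1)%N -> (0 < n)%N ->
  forall v : (n - t - 1).-tuple bool,
    Wder C t (true :: map negb (val v)) =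
    q2mul (q2 ((-1) ^+ wt v) 0) (q2mul (q2exp rho t) (Phi (Wder C t (false :: val v)))).
Proof.
move=> [_ _ C_orth] t _ _ v.
rewrite /Wder (reindex_inj (inv_inj (@map_tuple_negbK t))) /=.
rewrite (big_morph Phi PhiD Phi0) !(big_morph (q2mul _) (q2mulDr _) (q2mul0r _)).
apply: eq_bigr => u _.
rewrite -(W_map_negb C_orth) map_cat /= !(mapK negbK) PhiM Phi_W.
have [->|W_neq0] := eqVneq (W C (val u ++ false :: val v)) 0; first by rewrite !q2mul0r.
have even_uv := W_neq0_even C_orth W_neq0; rewrite wt_cat /= add0n in even_uv.
have le_ut : (wt u <= t)%N by have := count_size id u; rewrite size_tuple.
by rewrite wt_map_negb size_tuple (rho_exp_subn le_ut even_uv) !q2mulA.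
Qed.
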